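(* Let $X$ be a Hausdorff space and $A\in\mathcal{F}(X)$. The following are equivalent: (a) $A$ is a $P$-point of $\mathcal{F}(X)$; (b) $A$ is a $P$-point of $\mathcal{F}_n(X)$ for each positive integer $n\geq|A|$; (c) every $x\in A$ is a $P$-point of $X$.
   Context: $\mathcal{F}(X)$ is the set of nonempty finite subsets of $X$ and $\mathcal{F}_n(X)$ the set of nonempty subsets with at most $n$ points, both with the Vietoris topology (generated by $U^+=\{A: A\subset U\}$ and $U^-=\{A: A\cap U\neq\emptyset\}$ for $U$ open in $X$). A point $p$ of a space $Z$ is a $P$-point if $p$ lies in the interior of every $G_\delta$ subset of $Z$ containing $p$. *)

From HB Require Import structures.
From mathcomp Require Import all_boot all_order all_algebra.
From mathcomp Require Import all_classical all_reals all_analysis.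
Set Implicit Arguments. Unset Strict Implicit. Unset Printing Implicit Defensive.
Local Open Scope classical_set_scope.
Local Open Scope card_scope.

(* Vietoris topology on the type [set X] of all subsets of X, generated by the
   subbasic sets U^+ = [set A | A `<=` U] and U^- = [set A | A `&` U !=set0],
   U open in X.  A basic open set is a finite intersection of subbasic sets:
   U_0^+, ..., U_{m-1}^+, V_0^-, ..., V_{k-1}^-. *)
Definition vietoris_basic (X : topologicalType) (m k : nat) (U V : nat -> set X)
  : set (set X) :=
  [set A | (forall i, (i < m)%N -> A `<=` U i) /\
           (forall j, (j < k)%N -> A `&` V j !=set0)].

Definition vietoris_open (X : topologicalType) (W : set (set X)) : Prop :=
  forall A, W A -> exists m k (U V : nat -> set X),
    [/\ (forall i, (i < m)%N -> open (U i)),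
        (forall j, (j < k)%N -> open (V j)),
        vietoris_basic m k U V A &
        vietoris_basic m k U V `<=` W].

Definition Fin (X : Type) : set (set X) := [set A | finite_set A /\ A !=set0].

Definition Fin_n (X : Type) (n : nat) : set (set X) :=
  [set A | A !=set0 /\ (A #<= `I_n)].

(* p is a P-point of the subspace Z of a space T whose open sets are given by
   [op]: p lies in the (relative) interior of every G_delta subset of Z
   containing p.  A G_delta subset of Z is Z `&` \bigcap_k O k with each O k
   open in T (countable families are indexed by nat; finite families are
   covered by repetition). *)
Definition P_point (T : Type) (op : set T -> Prop) (Z : set T) (p : T) : Prop :=
  Z p /\
  forall O : nat -> set T, (forall k, op (O k)) -> (forall k, O k p) ->
    exists W, [/\ op W, W p & Z `&` W `<=` Z `&` \bigcap_k O k].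

From HB Require Import structures.
From mathcomp Require Import all_boot all_order all_algebra.
From mathcomp Require Import all_classical all_reals all_analysis.
Set Implicit Arguments. Unset Strict Implicit.
Local Open Scope classical_set_scope.
Local Open Scope card_scope.

(* A Vietoris neighbourhood of a finite set A contains one of the form
   "B is covered by the S a and meets every S a", with S a an open
   neighbourhood of each point a of A.  So countably many Vietoris
   neighbourhoods of A are controlled by countably many neighbourhoods of each
   point of A; if every point is a P-point, shrinking these gives (c) => (a).
   For (b) => (c), move the point x of A to a point y: the resulting set has
   at most |A| points and, for y close to x, lies in any prescribed Vietoris
   neighbourhood of A, so testing it against the Vietoris open sets "meets O_k \ (A \ {x})"
   (open since X is T_1) forces y into every O_k. *)

Lemma P_point_subset (T : Type) (op : set T -> Prop) (Z Z' : set T) (p : T) :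
  Z' `<=` Z -> Z' p -> P_point op Z p -> P_point op Z' p.
Proof.
move=> Z'Z Z'p [_ Pp]; split => // O Oop Op.
have [W [Wop Wp ZW]] := Pp O Oop Op.
exists W; split => // B [Z'B WB]; split => //.
by have [] := ZW B (conj (Z'Z B Z'B) WB).
Qed.

Lemma Fin_n_Fin (T : Type) (n : nat) : @Fin_n T n `<=` @Fin T.
Proof. by move=> B [B0 Bn]; split => //; exact: card_le_finite Bn (finite_II n). Qed.

Section VietorisNeighbourhoods.
Variable X : topologicalType.

Lemma open_bigcap_lt (m : nat) (P : nat -> Prop) (U : nat -> set X) :
  (forall i, (i < m)%N -> P i -> open (U i)) ->
  open [set y | forall i, (i < m)%N -> P i -> U i y].
Proof.
move=> Uop; pose U' i := if pselect (P i) then U i else setT.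
have -> : [set y | forall i, (i < m)%N -> P i -> U i y] = \bigcap_(i < m) U' i.
  apply/seteqP; split => y Uy i im; rewrite /U'.
    by case: pselect => // Pi; exact: Uy.
  by move=> Pi; have := Uy i im; rewrite /U'; case: pselect.
rewrite bigcap_mkord; apply: (@big_ind _ (@open X)) => [||i _].
- exact: openT.
- exact: openI.
- by rewrite /U'; case: pselect => [Pi|nPi]; [exact: Uop|exact: openT].
Qed.

Lemma vietoris_open_basic (m k : nat) (U V : nat -> set X) :
  (forall i, (i < m)%N -> open (U i)) -> (forall j, (j < k)%N -> open (V j)) ->
  vietoris_open (vietoris_basic m k U V).
Proof. by move=> Uop Vop B BUV; exists m, k, U, V; split. Qed.

(* The points to which x may be moved without leaving vietoris_basic m k U V. *)
Definition vietoris_slice (m k : nat) (U V : nat -> set X) (x : X) : set X :=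
  [set y | (forall i, (i < m)%N -> U i y) /\ (forall j, (j < k)%N -> V j x -> V j y)].

Lemma open_vietoris_slice (m k : nat) (U V : nat -> set X) (x : X) :
  (forall i, (i < m)%N -> open (U i)) -> (forall j, (j < k)%N -> open (V j)) ->
  open (vietoris_slice m k U V x).
Proof.
move=> Uop Vop.
have -> : vietoris_slice m k U V x =
    [set y | forall i, (i < m)%N -> True -> U i y] `&`
    [set y | forall j, (j < k)%N -> V j x -> V j y].
  by apply/seteqP; split => y [Uy Vy]; split => // i im; [move=> _|]; exact: Uy.
by apply: openI; apply: open_bigcap_lt => i im _; [exact: Uop|exact: Vop].
Qed.

Lemma vietoris_slice_refl (m k : nat) (U V : nat -> set X) (A : set X) (a : X) :
  vietoris_basic m k U V A -> A a -> vietoris_slice m k U V a a.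
Proof. by move=> [AU _] Aa; split => // i im; exact: AU. Qed.

Lemma vietoris_basic_slice (m k : nat) (U V : nat -> set X) (A B : set X) :
  vietoris_basic m k U V A ->
  B `<=` \bigcup_(a in A) vietoris_slice m k U V a ->
  (forall a, A a -> B `&` vietoris_slice m k U V a !=set0) ->
  vietoris_basic m k U V B.
Proof.
move=> [_ AV] BA AB; split => [i im b /BA [a _ [Ub _]]|j jk]; first exact: Ub.
have [a [Aa Va]] := AV j jk; have [b [Bb [_ Vb]]] := AB a Aa.
by exists b; split => //; exact: Vb.
Qed.

Lemma vietoris_open_points (O : set (set X)) (A : set X) :
  vietoris_open O -> O A ->
  exists S : X -> set X,
    [/\ forall a, A a -> open (S a), forall a, A a -> S a a &
        forall B, B `<=` \bigcup_(a in A) S a ->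
          (forall a, A a -> B `&` S a !=set0) -> O B].
Proof.
move=> Oop OA; have [m [k [U [V [Uop Vop AUV UVO]]]]] := Oop A OA.
exists (vietoris_slice m k U V); split => [a _|a|B BA AB].
- exact: open_vietoris_slice.
- exact: vietoris_slice_refl.
- exact/UVO/(vietoris_basic_slice AUV).
Qed.

Lemma vietoris_open_hit_all (A : set X) (W : X -> set X) :
  finite_set A -> (forall a, A a -> open (W a)) ->
  vietoris_open [set B | B `<=` \bigcup_(a in A) W a /\
                         forall a, A a -> B `&` W a !=set0].
Proof.
move=> /finite_seqP[s ->] Wop.
pose Ws := [seq W a | a <- s].
have -> : [set B | B `<=` \bigcup_(a in [set` s]) W a /\
                   forall a, a \in s -> B `&` W a !=set0] =
    vietoris_basic 1 (size s) (fun=> \bigcup_(a in [set` s]) W a) (nth set0 Ws).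
  apply/seteqP; split => B [BW BA].
    split => [i _|j]; first exact: BW.
    by rewrite -(size_map W) => /(mem_nth set0)/mapP[a as_ ->]; exact: BA.
  split => [|a as_]; first exact: BW 0%N isT.
  by have /(nthP set0)[j + <-] := map_f W as_; rewrite size_map; exact: BA.
apply: vietoris_open_basic => [i _|j]; first by apply: bigcup_open => a; exact: Wop.
by rewrite -(size_map W) => /(mem_nth set0)/mapP[a as_ ->]; exact: Wop.
Qed.

End VietorisNeighbourhoods.

Lemma P_point_points_of_Fin_n (X : topologicalType) (hX : hausdorff_space X)
    (A : set X) (n : nat) :
  A #<= `I_n -> P_point (@vietoris_open X) (@Fin_n X n) A ->
  forall x, A x -> P_point (@open X) setT x.
Proof.
move=> An [_ PA] x Ax; split => // O Oop Ox.
have Cop : open (~` (A `\ x)).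
  have T1_closed := accessible_finite_set_closed.1 (hausdorff_accessible hX).
  exact: closed_openC (T1_closed _ (finite_setD _ (card_le_finite An (finite_II n)))).
pose hit k := vietoris_basic 0 1 (fun=> setT) (fun=> O k `&` ~` (A `\ x)).
have [||W [Wop WA FW]] := PA hit.
- by move=> k; apply: vietoris_open_basic => // j _; exact: openI.
- by move=> k; split => // j _; exists x; do !split => //; move=> [_]; apply.
have [S [Sop Sa SW]] := vietoris_open_points Wop WA.
exists (S x); split; [exact: Sop|exact: Sa|move=> y [_ Sy]; split => // k _].
pose f a := if a == x then y else a.
have fx : f x = y by rewrite /f eqxx.
have fa a : a != x -> f a = a by rewrite /f => /negbTE ->.
have FnA : Fin_n n (f @` A).
  by split; [exists y, x|exact: card_le_trans (card_image_le f A) An].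
have WfA : W (f @` A).
  apply: SW => [_ [a Aa <-]|a Aa]; case: (eqVneq a x) => [->|ax].
  - by rewrite fx; exists x.
  - by rewrite fa //; exists a => //; exact: Sa.
  - by exists y; split => //; exists x.
  - by exists a; split; [exists a; rewrite ?fa|exact: Sa].
have [_ /(_ k I)[_ /(_ 0%N isT)[_ [[a Aa <-] [Ofa Cfa]]]]] := FW _ (conj FnA WfA).
case: (eqVneq a x) => [ax|ax]; first by rewrite ax fx in Ofa.
by rewrite fa // in Cfa; case: Cfa; split => //; exact/eqP.
Qed.

Lemma P_point_Fin_of_points (X : topologicalType) (A : set X) :
  Fin A -> (forall x, A x -> P_point (@open X) setT x) ->
  P_point (@vietoris_open X) (@Fin X) A.
Proof.
move=> FA Px; split => // O Oop OA.
have /choice[S hS] := fun k => vietoris_open_points (Oop k) (OA k).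
have /choice[W hW] : forall a, exists W : set X,
    A a -> [/\ open W, W a & W `<=` \bigcap_k S k a].
  move=> a; have [Aa|] := pselect (A a); last by exists setT.
  have [||W [Wop Wa WS]] := (Px a Aa).2 (S^~ a).
  - by move=> k; have [Sop _ _] := hS k; exact: Sop.
  - by move=> k; have [_ Sa _] := hS k; exact: Sa.
  by exists W => _; split => // y Wy; have [] := WS y (conj I Wy).
exists [set B | B `<=` \bigcup_(a in A) W a /\ forall a, A a -> B `&` W a !=set0].
split.
- by apply: vietoris_open_hit_all => [|a /hW[]//]; case: FA.
- by split => [a Aa|a Aa]; [exists a|exists a; split]; have [] := hW a Aa.
have WS a : A a -> W a `<=` \bigcap_k S k a by case/hW.
move=> B [FB [BW WB]]; split => // k _; have [_ _ SO] := hS k; apply: SO.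
- by move=> b /BW[a Aa /(WS a Aa)/(_ k I) Sb]; exists a.
- by move=> a Aa; have [b [Bb /(WS a Aa)/(_ k I) Sb]] := WB a Aa; exists b.
Qed.

Theorem proposition2p2 (X : topologicalType) (hX : hausdorff_space X)
  (A : set X) (hA : Fin A) :
  (P_point (@vietoris_open X) (@Fin X) A <->
     (forall n : nat, (0 < n)%N -> (A #<= `I_n) ->
        P_point (@vietoris_open X) (@Fin_n X n) A)) /\
  (P_point (@vietoris_open X) (@Fin X) A <->
     (forall x, A x -> P_point (@open X) setT x)).
Proof.
have a_b : P_point (@vietoris_open X) (@Fin X) A ->
    forall n, (0 < n)%N -> A #<= `I_n -> P_point (@vietoris_open X) (@Fin_n X n) A.
  by move=> PA n _ An; apply: P_point_subset PA; [exact: Fin_n_Fin|split => //; case: hA].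
have b_c : (forall n, (0 < n)%N -> A #<= `I_n ->
              P_point (@vietoris_open X) (@Fin_n X n) A) ->
    forall x, A x -> P_point (@open X) setT x.
  have [n /card_eqPle[An _]] := (finite_setP A).1 hA.1.
  have An1 : A #<= `I_n.+1.
    by apply: card_le_trans An (subset_card_le _) => i /= /ltnW.
  by move=> /(_ n.+1 isT An1); exact: (P_point_points_of_Fin_n (n := n.+1) hX An1).
have c_a := P_point_Fin_of_points hA.
split; split.
- exact: a_b.
- by move/b_c/c_a.
- by move/a_b/b_c.
- exact: c_a.
Qed.
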